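(* Let $G_1,G_2,H_1,H_2\in SL^+_{sym}(2)$ and let $g_i,h_i$ be the largest eigenvalues of $G_i,H_i$ ($i=1,2$). Then $$K^{min}\le\hat K:=\sqrt{g_1h_1g_2h_2}\le K:=\max\{g_1h_1,g_2h_2\}.$$ In particular $K^{min}<K$ whenever $g_1h_1\ne g_2h_2$.
   Context: $SL^+_{sym}(2)$: real symmetric positive definite $2\times2$ matrices with determinant $1$; $SL(2)$: real $2\times2$ matrices of determinant $1$; $\lambda_{\max}(M)$: largest eigenvalue of a symmetric $M$. For $G_1,G_2,H_1,H_2\in SL^+_{sym}(2)$ (the two phases of the two-phase fields $G=\chi_{E_1}G_1+\chi_{E_2}G_2$, $H=\chi_{E_1}H_1+\chi_{E_2}H_2$ with $E_1,E_2$ a measurable partition of $\Omega$ into sets of positive measure), define $$K^{min}:=\min_{A,B\in SL(2)}\ \max_{i=1,2}\ \lambda_{\max}(B^TG_iB)\,\lambda_{\max}(A^TH_iA).$$ *)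

From Stdlib Require Import Reals Lra.
Open Scope R_scope.

Record Mat2 := mkMat2 { m11 : R; m12 : R; m21 : R; m22 : R }.

Definition det2 (M : Mat2) : R := m11 M * m22 M - m12 M * m21 M.
Definition tr2 (M : Mat2) : R := m11 M + m22 M.
Definition transp (M : Mat2) : Mat2 := mkMat2 (m11 M) (m21 M) (m12 M) (m22 M).
Definition mul2 (M N : Mat2) : Mat2 :=
  mkMat2 (m11 M * m11 N + m12 M * m21 N) (m11 M * m12 N + m12 M * m22 N)
         (m21 M * m11 N + m22 M * m21 N) (m21 M * m12 N + m22 M * m22 N).

Definition qform (M : Mat2) (x y : R) : R :=
  x * (m11 M * x + m12 M * y) + y * (m21 M * x + m22 M * y).

Definition SL2 (A : Mat2) : Prop := det2 A = 1.

Definition SLsym2 (M : Mat2) : Prop :=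
  m12 M = m21 M /\
  (forall x y : R, (x <> 0 \/ y <> 0) -> 0 < qform M x y) /\
  det2 M = 1.

(* Largest eigenvalue of a (symmetric) 2x2 matrix: the larger root of the
   characteristic polynomial t^2 - tr(M) t + det(M). *)
Definition lam_max (M : Mat2) : R :=
  (tr2 M + sqrt (tr2 M * tr2 M - 4 * det2 M)) / 2.

Definition Kvals (G1 G2 H1 H2 : Mat2) (k : R) : Prop :=
  exists A B : Mat2, SL2 A /\ SL2 B /\
    k = Rmax (lam_max (mul2 (transp B) (mul2 G1 B)) * lam_max (mul2 (transp A) (mul2 H1 A)))
             (lam_max (mul2 (transp B) (mul2 G2 B)) * lam_max (mul2 (transp A) (mul2 H2 A))).

Definition is_glb (E : R -> Prop) (m : R) : Prop :=
  (forall x, E x -> m <= x) /\ (forall b, (forall x, E x -> b <= x) -> b <= m).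

(* Every [M] in SL^+_sym(2) has spectrum [m, 1/m] with [m = lam_max M >= 1], so
   [lam_max M <= c] as soon as [tr M <= c + 1/c] with [c >= 1].  For
   [1/m <= x <= 1] the matrix [B = al I + be M], with weights chosen so that [B]
   has eigenvalues [sqrt x] and [1/sqrt x], lies in SL(2), gives [B^T M B] the
   spectrum [m x, 1/(m x)], and [B B^T] the spectrum [x, 1/x].  For any other [N]
   in SL^+_sym(2), [tr (B^T N B) = tr (N B B^T)] is at most [n/x + x/n] (a
   Cauchy-Schwarz estimate for traces of products of unimodular symmetric
   matrices), so [lam_max (B^T N B) <= n / x].  Scaling the G's by [x] and the H's
   by [y] with [x y = sqrt (g2 h2 / (g1 h1))] when [g2 h2 <= g1 h1] brings both
   products to [sqrt (g1 h1 g2 h2)]; the rest compares a geometric mean with a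
   maximum. *)

From Stdlib Require Import Reals Lra Psatz.
Open Scope R_scope.

Local Notation congr B M := (mul2 (transp B) (mul2 M B)).
Local Notation gram B := (mul2 B (transp B)).

Lemma plus_inv_le_reg (a b : R) : 1 <= a -> 1 <= b -> a + / a <= b + / b -> a <= b.
Proof.
  intros Ha Hb Hab.
  assert (Hia : a * / a = 1) by (field; lra).
  assert (Hib : b * / b = 1) by (field; lra).
  assert (0 < / a) by (apply Rinv_0_lt_compat; lra).
  assert (0 < / b) by (apply Rinv_0_lt_compat; lra).
  destruct (Rle_lt_dec a b) as [| Hba]; [assumption | exfalso].
  assert (Hfactor : a + / a - (b + / b) = (a - b) * (1 - / a * / b)).
  { symmetry; transitivity ((a - b) - (a * / a) * / b + (b * / b) * / a); [ring |].
    rewrite Hia, Hib; ring. }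
  assert (/ a * / b < 1) by nra.
  nra.
Qed.

Lemma lam_max_spec (M : Mat2) : det2 M = 1 -> 2 <= tr2 M ->
  1 <= lam_max M /\ lam_max M + / lam_max M = tr2 M.
Proof.
  unfold lam_max; intros Hdet Htr; rewrite Hdet.
  set (t := tr2 M) in *.
  assert (Hdisc : 0 <= t * t - 4 * 1) by nra.
  pose proof (sqrt_sqrt _ Hdisc) as Hss; pose proof (sqrt_pos (t * t - 4 * 1)).
  set (s := sqrt (t * t - 4 * 1)) in *.
  split; [lra |].
  assert (Hinv : (t - s) / 2 = / ((t + s) / 2)).
  { apply Rmult_inv_r_uniq; [lra |]. nra. }
  rewrite <- Hinv; lra.
Qed.

Lemma SLsym2_tr2_ge2 (M : Mat2) : SLsym2 M -> 2 <= tr2 M.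
Proof.
  destruct M as [a b b' c]; unfold SLsym2, tr2, det2, qform; simpl.
  intros [Hsym [Hpos Hdet]]; subst b'.
  pose proof (Hpos 1 0 (or_introl R1_neq_R0)) as Ha.
  pose proof (Hpos 0 1 (or_intror R1_neq_R0)) as Hc.
  ring_simplify in Ha; ring_simplify in Hc.
  assert (4 <= (a + c) * (a + c)) by (pose proof (pow2_ge_0 (a - c)); pose proof (pow2_ge_0 b); nra).
  nra.
Qed.

Lemma lam_max_ge1 (M : Mat2) : SLsym2 M -> 1 <= lam_max M.
Proof. intro HM; apply lam_max_spec; [apply HM | exact (SLsym2_tr2_ge2 M HM)]. Qed.

Lemma lam_max_plus_inv (M : Mat2) : SLsym2 M -> lam_max M + / lam_max M = tr2 M.
Proof. intro HM; apply lam_max_spec; [apply HM | exact (SLsym2_tr2_ge2 M HM)]. Qed.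

Lemma lam_max_le (M : Mat2) (c : R) :
  SLsym2 M -> 1 <= c -> tr2 M <= c + / c -> lam_max M <= c.
Proof.
  intros HM Hc Htr; apply plus_inv_le_reg; [now apply lam_max_ge1 | exact Hc |].
  now rewrite lam_max_plus_inv.
Qed.

Lemma det2_congr (B M : Mat2) : det2 (congr B M) = det2 B * det2 B * det2 M.
Proof. destruct M, B; unfold det2; simpl; ring. Qed.

Lemma qform_congr (B M : Mat2) (x y : R) :
  qform (congr B M) x y = qform M (m11 B * x + m12 B * y) (m21 B * x + m22 B * y).
Proof. destruct M, B; unfold qform; simpl; ring. Qed.

Lemma SLsym2_congr (B M : Mat2) : SL2 B -> SLsym2 M -> SLsym2 (congr B M).
Proof.
  unfold SL2, SLsym2; intros HB [Hsym [Hpos Hdet]]; split; [| split].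
  - destruct M, B; simpl in *; subst; ring.
  - intros x y Hxy; rewrite qform_congr; apply Hpos.
    destruct (Req_dec (m11 B * x + m12 B * y) 0) as [H1 |]; [right | now left].
    intro H2; destruct B as [p q r s]; unfold det2 in HB; simpl in *.
    assert (Hx : x = s * (p * x + q * y) - q * (r * x + s * y))
      by (rewrite <- (Rmult_1_l x) at 1; rewrite <- HB; ring).
    assert (Hy : y = p * (r * x + s * y) - r * (p * x + q * y))
      by (rewrite <- (Rmult_1_l y) at 1; rewrite <- HB; ring).
    rewrite H1, H2 in *; destruct Hxy; lra.
  - now rewrite det2_congr, HB, Hdet; ring.
Qed.

Lemma tr2_congr_eq_tr2_mul_gram (B N : Mat2) : tr2 (congr B N) = tr2 (mul2 N (gram B)).
Proof. destruct B, N; unfold tr2; simpl; ring. Qed.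

Lemma gram_sym (B : Mat2) : m12 (gram B) = m21 (gram B).
Proof. destruct B; simpl; ring. Qed.

Lemma det2_gram (B : Mat2) : det2 (gram B) = det2 B * det2 B.
Proof. destruct B; unfold det2; simpl; ring. Qed.

(* For symmetric [P], [Q] of determinant 1 with eigenvalues [p, 1/p] and [q, 1/q]:
   [2 tr(PQ) = tr P tr Q + w] where [w] is a Cauchy-Schwarz pairing of the
   traceless parts, whose norms are [p - 1/p] and [q - 1/q]. *)
Lemma tr2_mul_le (P Q : Mat2) (p q : R) :
  m12 P = m21 P -> m12 Q = m21 Q -> det2 P = 1 -> det2 Q = 1 ->
  1 <= p -> 1 <= q -> tr2 P = p + / p -> tr2 Q = q + / q ->
  tr2 (mul2 P Q) <= p * q + / (p * q).
Proof.
  destruct P as [a b b' c], Q as [d e e' f]; unfold tr2, det2; simpl.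
  intros -> -> HdP HdQ Hp Hq HtP HtQ.
  rewrite Rinv_mult; set (ip := / p) in *; set (iq := / q) in *.
  assert (Hpi : p * ip = 1) by (unfold ip; field; lra).
  assert (Hqi : q * iq = 1) by (unfold iq; field; lra).
  assert (Hip : ip <= 1) by (unfold ip; rewrite <- Rinv_1; apply Rinv_le_contravar; lra).
  assert (Hiq : iq <= 1) by (unfold iq; rewrite <- Rinv_1; apply Rinv_le_contravar; lra).
  set (w := (a - c) * (d - f) + 4 * b' * e').
  assert (Hu : (a - c) * (a - c) + 4 * b' * b' = (p - ip) * (p - ip)).
  { transitivity ((a + c) * (a + c) - 4 * (a * c - b' * b')); [ring |].
    rewrite HtP, HdP; transitivity ((p + ip) * (p + ip) - 4 * (p * ip)); [rewrite Hpi | ]; ring. }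
  assert (Hv : (d - f) * (d - f) + 4 * e' * e' = (q - iq) * (q - iq)).
  { transitivity ((d + f) * (d + f) - 4 * (d * f - e' * e')); [ring |].
    rewrite HtQ, HdQ; transitivity ((q + iq) * (q + iq) - 4 * (q * iq)); [rewrite Hqi | ]; ring. }
  assert (Hcs : w * w <= ((p - ip) * (q - iq)) * ((p - ip) * (q - iq))).
  { replace (((p - ip) * (q - iq)) * ((p - ip) * (q - iq)))
      with (((a - c) * (a - c) + 4 * b' * b') * ((d - f) * (d - f) + 4 * e' * e'))
      by (rewrite Hu, Hv; ring).
    assert (Hlag : ((a - c) * (a - c) + 4 * b' * b') * ((d - f) * (d - f) + 4 * e' * e') - w * w
                   = ((a - c) * (2 * e') - (2 * b') * (d - f)) ^ 2) by (unfold w; ring).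
    pose proof (pow2_ge_0 ((a - c) * (2 * e') - (2 * b') * (d - f))); lra. }
  assert (Hw : w <= (p - ip) * (q - iq)).
  { assert (0 <= (p - ip) * (q - iq)) by (apply Rmult_le_pos; lra).
    destruct (Rle_lt_dec w ((p - ip) * (q - iq))); [assumption | nra]. }
  assert (H2tr : 2 * (a * d + b' * e' + (e' * b' + c * f)) = (a + c) * (d + f) + w)
    by (unfold w; ring).
  rewrite HtP, HtQ in H2tr.
  assert (Hsum : (p + ip) * (q + iq) + (p - ip) * (q - iq) = 2 * (p * q + ip * iq)) by ring.
  lra.
Qed.

Definition pencil (al be : R) (M : Mat2) : Mat2 :=
  mkMat2 (al + be * m11 M) (be * m12 M) (be * m21 M) (al + be * m22 M).

Section Pencil.

Variables (M : Mat2) (m al be : R).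
Hypotheses (Hsym : m12 M = m21 M) (Hdet : det2 M = 1) (Hm : 0 < m) (Htr : tr2 M = m + / m).

(* [pencil al be M] is a polynomial in [M], so its spectrum is
   [al + be * m, al + be / m]; the three identities below express this
   through Cayley-Hamilton, with the power sums of [M] written in [tr2 M]
   and [det2 M]. *)
Lemma det2_pencil : det2 (pencil al be M) = (al + be * m) * (al + be * / m).
Proof.
  transitivity (al * al + al * be * tr2 M + be * be * det2 M).
  { destruct M; unfold det2, tr2; simpl in *; subst; ring. }
  rewrite Htr, Hdet; field; lra.
Qed.

Lemma tr2_congr_pencil :
  tr2 (congr (pencil al be M) M)
  = m * (al + be * m) ^ 2 + / m * (al + be * / m) ^ 2.
Proof.
  transitivity (al ^ 2 * tr2 M + 2 * al * be * (tr2 M ^ 2 - 2 * det2 M)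
                + be ^ 2 * (tr2 M ^ 3 - 3 * tr2 M * det2 M)).
  { destruct M; unfold det2, tr2; simpl in *; subst; ring. }
  rewrite Htr, Hdet; field; lra.
Qed.

Lemma tr2_gram_pencil :
  tr2 (gram (pencil al be M)) = (al + be * m) ^ 2 + (al + be * / m) ^ 2.
Proof.
  transitivity (2 * al ^ 2 + 2 * al * be * tr2 M + be ^ 2 * (tr2 M ^ 2 - 2 * det2 M)).
  { destruct M; unfold det2, tr2; simpl in *; subst; ring. }
  rewrite Htr, Hdet; field; lra.
Qed.

End Pencil.

Lemma exists_pencil_weights (m x : R) : 1 <= m -> / m <= x <= 1 ->
  exists al be, al + be * m = sqrt x /\ al + be * / m = / sqrt x.
Proof.
  intros Hm Hx.
  destruct (Req_dec m 1) as [-> | Hm1].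
  - rewrite Rinv_1 in Hx; replace x with 1 by lra.
    exists 1, 0; rewrite sqrt_1, Rinv_1; split; ring.
  - assert (Hr : 0 < sqrt x) by (apply sqrt_lt_R0; pose proof (Rinv_0_lt_compat m); lra).
    assert (Hgap : m * m - 1 <> 0) by nra.
    set (be := (sqrt x - / sqrt x) / (m - / m)).
    exists (sqrt x - be * m), be; unfold be; split; field; lra.
Qed.

Lemma exists_SL2_congr_traces (M : Mat2) (x : R) :
  SLsym2 M -> / lam_max M <= x <= 1 ->
  exists B, SL2 B /\
    tr2 (congr B M) = lam_max M * x + / (lam_max M * x) /\
    tr2 (gram B) = / x + / / x.
Proof.
  intros HM Hx.
  pose proof (lam_max_ge1 M HM) as Hm; pose proof (lam_max_plus_inv M HM) as Htr.
  destruct HM as [Hsym [_ Hdet]].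
  set (m := lam_max M) in *.
  assert (Hx0 : 0 < x) by (pose proof (Rinv_0_lt_compat m); lra).
  destruct (exists_pencil_weights m x Hm Hx) as (al & be & Hr & Hir).
  assert (Hr2 : sqrt x ^ 2 = x) by (rewrite pow2_sqrt; lra).
  assert (Hir2 : (/ sqrt x) ^ 2 = / x) by (rewrite pow_inv, Hr2; reflexivity).
  exists (pencil al be M); unfold SL2; repeat split.
  - rewrite (det2_pencil M m) by (auto; lra); rewrite Hr, Hir.
    field; apply Rgt_not_eq, sqrt_lt_R0; lra.
  - rewrite (tr2_congr_pencil M m) by (auto; lra); rewrite Hr, Hir, Hr2, Hir2; field; lra.
  - rewrite (tr2_gram_pencil M m) by (auto; lra); rewrite Hr, Hir, Hr2, Hir2, Rinv_inv; ring.
Qed.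

Lemma exists_SL2_lam_max_bounds (M N : Mat2) (x : R) :
  SLsym2 M -> SLsym2 N -> / lam_max M <= x <= 1 ->
  exists B, SL2 B /\
    lam_max (congr B M) <= lam_max M * x /\
    lam_max (congr B N) <= lam_max N / x.
Proof.
  intros HM HN Hx.
  destruct (exists_SL2_congr_traces M x HM Hx) as (B & HB & HtrM & Hgram).
  pose proof (lam_max_ge1 M HM) as Hm; pose proof (lam_max_ge1 N HN) as Hn.
  assert (Hx0 : 0 < x) by (pose proof (Rinv_0_lt_compat (lam_max M)); lra).
  assert (Hix : 1 <= / x) by (rewrite <- Rinv_1; apply Rinv_le_contravar; lra).
  exists B; split; [exact HB | split].
  - apply lam_max_le; [now apply SLsym2_congr | | lra].
    rewrite <- (Rinv_r (lam_max M)) by lra; apply Rmult_le_compat_l; lra.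
  - apply lam_max_le; [now apply SLsym2_congr | unfold Rdiv; nra |].
    rewrite tr2_congr_eq_tr2_mul_gram.
    apply (tr2_mul_le N (gram B)); try assumption.
    + apply HN.
    + apply gram_sym.
    + apply HN.
    + now rewrite det2_gram, HB; ring.
    + symmetry; now apply lam_max_plus_inv.
Qed.

Lemma exists_mul_eq_in_unit_intervals (a b z : R) :
  1 <= a -> 1 <= b -> / (a * b) <= z <= 1 ->
  exists x y, / a <= x <= 1 /\ / b <= y <= 1 /\ x * y = z.
Proof.
  intros Ha Hb Hz.
  assert (Hia : a * / a = 1) by (field; lra).
  assert (Hia1 : / a <= 1) by (rewrite <- Rinv_1; apply Rinv_le_contravar; lra).
  assert (Hib1 : / b <= 1) by (rewrite <- Rinv_1; apply Rinv_le_contravar; lra).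
  rewrite Rinv_mult in Hz.
  destruct (Rle_lt_dec (/ a) z).
  - exists z, 1; repeat split; lra.
  - exists (/ a), (z * a); repeat split; [lra | lra | nra | nra |].
    transitivity (z * (a * / a)); [ring | rewrite Hia; ring].
Qed.

Lemma lam_max_congr_ge0 (B M : Mat2) : SL2 B -> SLsym2 M -> 0 <= lam_max (congr B M).
Proof. intros HB HM; pose proof (lam_max_ge1 _ (SLsym2_congr B M HB HM)); lra. Qed.

Lemma exists_Kvals_le_sqrt_of_le (G1 G2 H1 H2 : Mat2) :
  SLsym2 G1 -> SLsym2 G2 -> SLsym2 H1 -> SLsym2 H2 ->
  lam_max G2 * lam_max H2 <= lam_max G1 * lam_max H1 ->
  exists k, Kvals G1 G2 H1 H2 k /\
    k <= sqrt (lam_max G1 * lam_max H1 * (lam_max G2 * lam_max H2)).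
Proof.
  intros HG1 HG2 HH1 HH2 Hvu.
  pose proof (lam_max_ge1 G1 HG1); pose proof (lam_max_ge1 G2 HG2).
  pose proof (lam_max_ge1 H1 HH1); pose proof (lam_max_ge1 H2 HH2).
  assert (Hv : 1 <= lam_max G2 * lam_max H2) by nra.
  set (u := lam_max G1 * lam_max H1) in *; set (v := lam_max G2 * lam_max H2) in *.
  set (S := sqrt (u * v)).
  assert (HSS : S * S = u * v) by (apply sqrt_sqrt; nra).
  assert (HS1 : 1 <= S) by (rewrite <- sqrt_1; apply sqrt_le_1_alt; nra).
  assert (HSu : S <= u) by nra.
  destruct (exists_mul_eq_in_unit_intervals (lam_max G1) (lam_max H1) (S / u))
    as (x & y & Hx & Hy & Hxy); try lra.
  { fold u; assert (0 < / u) by (apply Rinv_0_lt_compat; lra); split; unfold Rdiv.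
    - rewrite <- (Rmult_1_l (/ u)) at 1; apply Rmult_le_compat_r; lra.
    - rewrite <- (Rinv_r u) by lra; apply Rmult_le_compat_r; [left; apply Rinv_0_lt_compat |]; lra. }
  destruct (exists_SL2_lam_max_bounds G1 G2 x HG1 HG2 Hx) as (B & HB & HBG1 & HBG2).
  destruct (exists_SL2_lam_max_bounds H1 H2 y HH1 HH2 Hy) as (A & HA & HAH1 & HAH2).
  eexists; split; [exists A, B; repeat split; eassumption |].
  pose proof (lam_max_congr_ge0 B G1 HB HG1); pose proof (lam_max_congr_ge0 B G2 HB HG2).
  pose proof (lam_max_congr_ge0 A H1 HA HH1); pose proof (lam_max_congr_ge0 A H2 HA HH2).
  assert (Hx0 : 0 < x) by (pose proof (Rinv_0_lt_compat (lam_max G1)); lra).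
  assert (Hy0 : 0 < y) by (pose proof (Rinv_0_lt_compat (lam_max H1)); lra).
  apply Rmax_lub; (eapply Rle_trans; [apply Rmult_le_compat; eassumption |]); right.
  - transitivity (u * (x * y)); [unfold u; ring |].
    rewrite Hxy; field; lra.
  - transitivity (v / (x * y)); [unfold v; field; lra |].
    rewrite Hxy; apply (Rmult_eq_reg_l S); [| lra].
    rewrite HSS; field; lra.
Qed.

Lemma Kvals_swap (G1 G2 H1 H2 : Mat2) (k : R) :
  Kvals G1 G2 H1 H2 k -> Kvals G2 G1 H2 H1 k.
Proof.
  intros (A & B & HA & HB & ->); exists A, B; repeat split; try assumption.
  apply Rmax_comm.
Qed.

Lemma exists_Kvals_le_sqrt (G1 G2 H1 H2 : Mat2) :
  SLsym2 G1 -> SLsym2 G2 -> SLsym2 H1 -> SLsym2 H2 ->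
  exists k, Kvals G1 G2 H1 H2 k /\
    k <= sqrt (lam_max G1 * lam_max H1 * (lam_max G2 * lam_max H2)).
Proof.
  intros HG1 HG2 HH1 HH2.
  destruct (Rle_lt_dec (lam_max G2 * lam_max H2) (lam_max G1 * lam_max H1)).
  - now apply exists_Kvals_le_sqrt_of_le.
  - destruct (exists_Kvals_le_sqrt_of_le G2 G1 H2 H1) as (k & Hk & Hle); try (auto || lra).
    exists k; split; [now apply Kvals_swap |].
    now rewrite Rmult_comm.
Qed.

Lemma sqrt_mul_le_Rmax (u v : R) : 0 <= u -> 0 <= v -> sqrt (u * v) <= Rmax u v.
Proof.
  intros Hu Hv; pose proof (Rmax_l u v); pose proof (Rmax_r u v).
  rewrite <- (sqrt_square (Rmax u v)) by lra.
  apply sqrt_le_1_alt, Rmult_le_compat; lra.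
Qed.

Lemma sqrt_mul_lt_Rmax (u v : R) : 0 <= u -> 0 <= v -> u <> v -> sqrt (u * v) < Rmax u v.
Proof.
  intros Hu Hv Huv.
  rewrite <- (sqrt_square (Rmax u v)) by (pose proof (Rmax_l u v); lra).
  apply sqrt_lt_1_alt; split; [nra |].
  unfold Rmax; destruct (Rle_dec u v); [assert (u < v) by lra | ]; nra.
Qed.

Theorem mainTheorem6 (G1 G2 H1 H2 : Mat2) :
  SLsym2 G1 -> SLsym2 G2 -> SLsym2 H1 -> SLsym2 H2 ->
  forall Kmin : R, is_glb (Kvals G1 G2 H1 H2) Kmin ->
  let g1 := lam_max G1 in let g2 := lam_max G2 in
  let h1 := lam_max H1 in let h2 := lam_max H2 in
  Kmin <= sqrt (g1 * h1 * g2 * h2) /\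
  sqrt (g1 * h1 * g2 * h2) <= Rmax (g1 * h1) (g2 * h2) /\
  (g1 * h1 <> g2 * h2 -> Kmin < Rmax (g1 * h1) (g2 * h2)).
Proof.
  intros HG1 HG2 HH1 HH2 Kmin [Hlower _]; cbv zeta.
  destruct (exists_Kvals_le_sqrt G1 G2 H1 H2 HG1 HG2 HH1 HH2) as (k & Hk & Hle).
  pose proof (Hlower k Hk) as HKmin.
  pose proof (lam_max_ge1 G1 HG1); pose proof (lam_max_ge1 G2 HG2).
  pose proof (lam_max_ge1 H1 HH1); pose proof (lam_max_ge1 H2 HH2).
  assert (Hu : 0 <= lam_max G1 * lam_max H1) by nra.
  assert (Hv : 0 <= lam_max G2 * lam_max H2) by nra.
  rewrite (Rmult_assoc (lam_max G1 * lam_max H1)).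
  split; [lra | split; [now apply sqrt_mul_le_Rmax |]].
  intro Hne; pose proof (sqrt_mul_lt_Rmax _ _ Hu Hv Hne); lra.
Qed.
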